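(* Let $M$ be a duplicial module in a pre-additive category. For all $n\ge0$, $$\pi_n=\kappa_n^n-b_{n+1}\kappa_{n+1}^n d_n .$$
   Context: Let $\mathcal A$ be a pre-additive category. Let $\Lambda_+$ be the category with objects $[n]$, $n\ge0$, where $\Lambda_+([m],[n])$ is the set of weakly monotone $f:\mathbb Z\to\mathbb Z$ with $f(j+m+1)=f(j)+n+1$ for all $j$ and $f(0)\ge0$. Define $\varepsilon^n_i:[n-1]\to[n]$ ($n\ge1$, $0\le i\le n$) by $\varepsilon^n_i(j)=j$ for $0\le j<i$, $j+1$ for $i\le j\le n-1$, and $\eta^n_i:[n+1]\to[n]$ ($0\le i\le n+1$) by $\eta^n_i(j)=j$ for $0\le j\le i$, $j-1$ for $i<j\le n+1$. A duplicial module is a functor $M:\Lambda_+^{op}\to\mathcal A$; $M_n=M([n])$, $\partial_{n,i}=M(\varepsilon^n_i):M_n\to M_{n-1}$, $s_{n,i}=M(\eta^n_i):M_n\to M_{n+1}$. Convention $M_{-1}=0$, maps into/out of it zero. Define $b_n=\sum_{i=0}^n(-1)^i\partial_{n,i}$ ($b_0=0$), $d_n=\sum_{i=0}^{n+1}(-1)^is_{n,i}$, the Karoubi operator $\kappa_n=(-1)^n(\partial_{n+1,0}s_{n,n+1}-s_{n-1,n}\partial_{n,0})$ (so $\kappa_0=\partial_{1,0}s_{0,1}$), and the Dwyer–Kan operator $\pi_n=(-1)^n\partial_{n+1,0}\kappa_{n+1}^n s_{n,n+1}:M_n\to M_n$. *)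

From HB Require Import structures.
From mathcomp Require Import all_boot all_order all_algebra.
From Stdlib Require Import ZArith Lia.

Set Implicit Arguments.
Unset Strict Implicit.
Unset Printing Implicit Defensive.

Import GRing.Theory.

(* Pre-additive categories: hom-sets are abelian groups and composition
   is biadditive.  [mcomp g f] is "g after f".                          *)
Record preadditive := PreAdditive {
  Ob : Type;
  Hom : Ob -> Ob -> zmodType;
  mcomp : forall a b c : Ob, Hom b c -> Hom a b -> Hom a c;
  idm : forall a : Ob, Hom a a;
  compA : forall a b c d (h : Hom c d) (g : Hom b c) (f : Hom a b),
      mcomp h (mcomp g f) = mcomp (mcomp h g) f;
  comp1m : forall a b (f : Hom a b), mcomp (idm b) f = f;
  compm1 : forall a b (f : Hom a b), mcomp f (idm a) = f;
  compDl : forall a b c (g1 g2 : Hom b c) (f : Hom a b),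
      mcomp (g1 + g2)%R f = (mcomp g1 f + mcomp g2 f)%R;
  compDr : forall a b c (g : Hom b c) (f1 f2 : Hom a b),
      mcomp g (f1 + f2)%R = (mcomp g f1 + mcomp g f2)%R
}.
Arguments mcomp {p a b c}.
Arguments idm {p a}.
Arguments Hom : clear implicits.

(* The category Lambda_+ : objects [n], n : nat; morphisms [m] -> [n] are
   weakly monotone f : Z -> Z with f (j+m+1) = f j + n + 1 and f 0 >= 0. *)
Definition is_lam (m n : nat) (f : Z -> Z) : Prop :=
  (forall j k : Z, (j <= k)%Z -> (f j <= f k)%Z) /\
  (forall j : Z, f (j + Z.of_nat m + 1)%Z = (f j + Z.of_nat n + 1)%Z) /\
  (0 <= f 0%Z)%Z.

Record lam_hom (m n : nat) := LamHom {
  lam_fun :> Z -> Z;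
  lam_prop : is_lam m n lam_fun
}.

Lemma lam_id_prop n : is_lam n n (fun j => j).
Proof. split; [|split]; intros; lia. Qed.

Definition lam_id n : lam_hom n n := LamHom (lam_id_prop n).

Lemma lam_comp_prop m n p (g : lam_hom n p) (f : lam_hom m n) :
  is_lam m p (fun j => g (f j)).
Proof.
case: g => g [gm [gp g0]]; case: f => f [fm [fp f0]] /=.
split; [|split].
- by move=> j k Hjk; apply: gm; apply: fm.
- by move=> j; rewrite fp gp.
- by apply: Z.le_trans g0 (gm _ _ f0).
Qed.

Definition lam_comp m n p (g : lam_hom n p) (f : lam_hom m n) : lam_hom m p :=
  LamHom (lam_comp_prop g f).

(* epsilon^{k+1}_i : [k] -> [k+1], 0 <= i <= k+1.
   On 0..k it is j |-> j (j < i), j+1 (j >= i); extended periodically: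
   eps(j) = j + 1 + floor((j - i)/(k+1)). *)
Definition eps_fun (k : nat) (i : nat) (j : Z) : Z :=
  (j + 1 + (j - Z.of_nat i) / (Z.of_nat k + 1))%Z.

Lemma eps_prop k (i : 'I_k.+2) : is_lam k k.+1 (eps_fun k i).
Proof.
have /ltP Hi := ltn_ord i.
rewrite /eps_fun; set N := (Z.of_nat k + 1)%Z.
have HN : (0 < N)%Z by rewrite /N; lia.
split; [|split].
- move=> j j' Hj.
  have := Z.div_le_mono (j - Z.of_nat i) (j' - Z.of_nat i) N HN ltac:(lia); lia.
- move=> j.
  have -> : (j + Z.of_nat k + 1 - Z.of_nat i = (j - Z.of_nat i) + 1 * N)%Z
    by rewrite /N; lia.
  rewrite Z.div_add; last by lia.
  rewrite /N; lia.
- have : (-1 <= (0 - Z.of_nat i) / N)%Z.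
    by apply: Z.div_le_lower_bound => //; rewrite /N; lia.
  lia.
Qed.

Definition eps (k : nat) (i : 'I_k.+2) : lam_hom k k.+1 := LamHom (eps_prop i).

(* eta^k_i : [k+1] -> [k], 0 <= i <= k+1.
   On 0..k+1 it is j |-> j (j <= i), j-1 (j > i); extended periodically:
   eta(j) = j - 1 - floor((j - i - 1)/(k+2)). *)
Definition eta_fun (k : nat) (i : nat) (j : Z) : Z :=
  (j - 1 - (j - Z.of_nat i - 1) / (Z.of_nat k + 2))%Z.

Lemma eta_prop k (i : 'I_k.+2) : is_lam k.+1 k (eta_fun k i).
Proof.
have /ltP Hi := ltn_ord i.
rewrite /eta_fun; set P := (Z.of_nat k + 2)%Z.
have HP : (0 < P)%Z by rewrite /P; lia.
split; [|split].
- move=> j j' Hj.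
  set a := (j - Z.of_nat i - 1)%Z; set b := (j' - Z.of_nat i - 1)%Z.
  have H1 : (b / P <= (a + (j' - j) * P) / P)%Z.
    by apply: Z.div_le_mono => //; rewrite /a /b; nia.
  rewrite Z.div_add in H1; last by lia.
  lia.
- move=> j.
  have -> : (j + Z.of_nat k.+1 + 1 - Z.of_nat i - 1
             = (j - Z.of_nat i - 1) + 1 * P)%Z by rewrite /P; lia.
  rewrite Z.div_add; last by lia.
  rewrite /P; lia.
- have : ((0 - Z.of_nat i - 1) / P < 0)%Z.
    by apply: Z.div_lt_upper_bound => //; lia.
  lia.
Qed.

Definition eta (k : nat) (i : 'I_k.+2) : lam_hom k.+1 k := LamHom (eta_prop i).

(* Duplicial modules: functors Lambda_+^op -> A. *)
Record duplicial (A : preadditive) := Duplicial {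
  Mob : nat -> Ob A;
  Mmor : forall m n : nat, lam_hom m n -> Hom A (Mob n) (Mob m);
  Mmor_id : forall n, Mmor (lam_id n) = idm;
  Mmor_comp : forall m n p (g : lam_hom n p) (f : lam_hom m n),
      Mmor (lam_comp g f) = mcomp (Mmor f) (Mmor g)
}.

Section Operators.
Variables (A : preadditive) (M : duplicial A).
Local Open Scope ring_scope.

Local Notation "M_[ n ]" := (Mob M n) (format "M_[ n ]").

Definition sgn {a b : Ob A} (i : nat) (x : Hom A a b) : Hom A a b :=
  x *~ ((-1) ^+ i).

(* del k i = partial_{k+1,i} : M_{k+1} -> M_k,  0 <= i <= k+1 *)
Definition del (k : nat) (i : 'I_k.+2) : Hom A M_[ k.+1 ] M_[ k ] :=
  Mmor M (eps i).

Definition sdeg (k : nat) (i : 'I_k.+2) : Hom A M_[ k ] M_[ k.+1 ] :=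
  Mmor M (eta i).

(* bnd k = b_{k+1} : M_{k+1} -> M_k *)
Definition bnd (k : nat) : Hom A M_[ k.+1 ] M_[ k ] :=
  \sum_(i < k.+2) sgn i (del i).

Definition dd (n : nat) : Hom A M_[ n ] M_[ n.+1 ] :=
  \sum_(i < n.+2) sgn i (sdeg i).

(* Karoubi operator kappa_n : M_n -> M_n (with M_{-1} = 0) *)
Definition kappa (n : nat) : Hom A M_[ n ] M_[ n ] :=
  match n with
  | 0 => mcomp (del (k:=0) ord0) (sdeg (k:=0) ord_max)
  | k.+1 => sgn k.+1 (mcomp (del (k:=k.+1) ord0) (sdeg (k:=k.+1) ord_max)
                      - mcomp (sdeg (k:=k) ord_max) (del (k:=k) ord0))
  end.

Definition kappa_pow (n j : nat) : Hom A M_[ n ] M_[ n ] :=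
  ssrnat.iter j (mcomp (kappa n)) idm.

Definition dk_pi (n : nat) : Hom A M_[ n ] M_[ n ] :=
  sgn n (mcomp (del (k:=n) ord0) (mcomp (kappa_pow n.+1 n) (sdeg (k:=n) ord_max))).

End Operators.

(* The Karoubi operator anticommutes with the inner faces and degeneracies,
   ∂_a κ = - κ ∂_(a+1) for a >= 1 and κ s_c = - s_(c-1) κ for c >= 1, while the
   last face kills it on the left and s_0 on the right.  Iterating, κ^n s_c = 0
   for c < n and ∂_a κ^n = 0 for a >= 2, so in b κ^n d only the four terms with
   a in {0, 1} and c in {n, n+1} survive.  Moving κ^n past the remaining face or
   degeneracy, three of them collapse to ±κ^n through ∂_0 s_0 = ∂_1 s_0 =
   ∂_(n+1) s_(n+1) = id and the fourth is -π_n, whence b κ^n d = κ^n - π_n. *)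

From Pilot Require Import Defs.
From mathcomp Require Import all_boot all_order all_algebra zify.
From Stdlib Require Import ZArith Lia ProofIrrelevance FunctionalExtensionality.
Import GRing.Theory.

Set Implicit Arguments.
Unset Strict Implicit.
Unset Printing Implicit Defensive.

Lemma lam_hom_shift m n (f : lam_hom m n) (q j : Z) :
  f (j + q * (Z.of_nat m + 1))%Z = (f j + q * (Z.of_nat n + 1))%Z.
Proof.
case: f => f [_ [f_period _]] /=.
move: j; induction q as [|q IHq|q IHq] using Z.peano_ind => j.
- by rewrite !Z.mul_0_l !Z.add_0_r.
- have -> : (j + Z.succ q * (Z.of_nat m + 1)
             = j + q * (Z.of_nat m + 1) + Z.of_nat m + 1)%Z by lia.
  rewrite f_period IHq; lia.
- have := f_period (j + Z.pred q * (Z.of_nat m + 1))%Z.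
  have -> : (j + Z.pred q * (Z.of_nat m + 1) + Z.of_nat m + 1
             = j + q * (Z.of_nat m + 1))%Z by lia.
  rewrite IHq; lia.
Qed.

Lemma lam_hom_eq m n (f g : lam_hom m n) :
  (forall j, (0 <= j <= Z.of_nat m)%Z -> f j = g j) -> f = g.
Proof.
move=> fg_dom.
have fg j : f j = g j.
  have N_gt0 : (0 < Z.of_nat m + 1)%Z by lia.
  have [r_ge0 r_ltN] := Z.mod_pos_bound j _ N_gt0.
  have -> : j = (j mod (Z.of_nat m + 1) + j / (Z.of_nat m + 1) * (Z.of_nat m + 1))%Z.
    by rewrite Z.add_comm Z.mul_comm -Z.div_mod //; lia.
  by rewrite !lam_hom_shift fg_dom //; lia.
case: f g fg {fg_dom} => f f_lam [g g_lam] /= fg.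
have fgE : f = g := functional_extensionality _ _ fg.
by subst g; rewrite (proof_irrelevance _ f_lam g_lam).
Qed.

Lemma eps_fun_eq k i j q :
  (q * (Z.of_nat k + 1) <= j - Z.of_nat i < q * (Z.of_nat k + 1) + Z.of_nat k + 1)%Z ->
  eps_fun k i j = (j + 1 + q)%Z.
Proof.
move=> j_range; rewrite /eps_fun.
by rewrite -(Z.div_unique (j - Z.of_nat i) (Z.of_nat k + 1) q
                             (j - Z.of_nat i - q * (Z.of_nat k + 1))); lia.
Qed.

Lemma eta_fun_eq k i j q :
  (q * (Z.of_nat k + 2) <= j - Z.of_nat i - 1 < q * (Z.of_nat k + 2) + Z.of_nat k + 2)%Z ->
  eta_fun k i j = (j - 1 - q)%Z.
Proof.
move=> j_range; rewrite /eta_fun.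
by rewrite -(Z.div_unique (j - Z.of_nat i - 1) (Z.of_nat k + 2) q
                             (j - Z.of_nat i - 1 - q * (Z.of_nat k + 2))); lia.
Qed.

Arguments eps_fun : simpl never.
Arguments eta_fun : simpl never.

(* An identity between composites of faces and degeneracies of a duplicial
   module is checked in Lambda_+, pointwise on [0, m]: there every eps/eta is
   [j |-> j + c] with a floor quotient [c] in {-1, 0, 1}, found by splitting
   on the range of an innermost argument. *)
Ltac eval_lam_fun := match goal with
  | |- context [eps_fun ?k ?i ?x] => first
      [ rewrite (@eps_fun_eq k i x 0); [|lia]
      | rewrite (@eps_fun_eq k i x (-1)); [|lia]
      | rewrite (@eps_fun_eq k i x 1); [|lia] ]
  | |- context [eta_fun ?k ?i ?x] => first
      [ rewrite (@eta_fun_eq k i x 0); [|lia]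
      | rewrite (@eta_fun_eq k i x (-1)); [|lia]
      | rewrite (@eta_fun_eq k i x 1); [|lia] ]
  end.

Ltac no_lam_fun x := lazymatch x with
  | context [eps_fun _ _ _] => fail
  | context [eta_fun _ _ _] => fail
  | _ => idtac
  end.

Ltac split_lam_arg := match goal with
  | |- context [eps_fun ?k ?i ?x] => no_lam_fun x;
      let N := constr:((Z.of_nat k + 1)%Z) in
      destruct (Z_lt_le_dec (x - Z.of_nat i) 0);
      [ destruct (Z_lt_le_dec (x - Z.of_nat i) (- N))
      | destruct (Z_lt_le_dec (x - Z.of_nat i) N) ]
  | |- context [eta_fun ?k ?i ?x] => no_lam_fun x;
      let N := constr:((Z.of_nat k + 2)%Z) in
      destruct (Z_lt_le_dec (x - Z.of_nat i - 1) 0);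
      [ destruct (Z_lt_le_dec (x - Z.of_nat i - 1) (- N))
      | destruct (Z_lt_le_dec (x - Z.of_nat i - 1) N) ]
  end.

Ltac lam_arith depth := repeat eval_lam_fun;
  first [ lia | lazymatch depth with S ?d => split_lam_arg; lam_arith d end ].

Ltac duplicial_identity M :=
  rewrite /del /sdeg -?(Mmor_comp M) -?(Mmor_id M); congr (Mmor M _);
  apply: lam_hom_eq => j j_range /=; lam_arith 2.

Section DuplicialIdentities.
Variables (A : preadditive) (M : duplicial A).

Definition del0_slast k :=
  mcomp (del M (k:=k) ord0) (sdeg M (k:=k) ord_max).

Definition slast_del0 k :=
  mcomp (sdeg M (k:=k) ord_max) (del M (k:=k) ord0).

Lemma del_del0_slast k (a b : 'I_k.+3) : 0 < a -> b = a.+1 :> nat ->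
  mcomp (del M a) (del0_slast k.+2) = mcomp (del0_slast k.+1) (del M b).
Proof. move: (ltn_ord a) (ltn_ord b) => *; rewrite /del0_slast; duplicial_identity M. Qed.

Lemma del_slast_del0 k (a b : 'I_k.+3) : 0 < a -> b = a.+1 :> nat ->
  mcomp (del M a) (slast_del0 k.+1) = mcomp (slast_del0 k) (del M b).
Proof. move: (ltn_ord a) (ltn_ord b) => *; rewrite /slast_del0; duplicial_identity M. Qed.

Lemma del_last_del0_slast n :
  mcomp (del M (k:=n) ord_max) (del0_slast n.+1)
  = mcomp (del M ord_max) (slast_del0 n).
Proof. rewrite /del0_slast /slast_del0; duplicial_identity M. Qed.

Lemma del0_slast_sdeg k (c b : 'I_k.+3) : 0 < c <= k.+1 -> c = b.+1 :> nat ->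
  mcomp (del0_slast k.+2) (sdeg M c) = mcomp (sdeg M b) (del0_slast k.+1).
Proof. move: (ltn_ord c) (ltn_ord b) => *; rewrite /del0_slast; duplicial_identity M. Qed.

Lemma slast_del0_sdeg k (c b : 'I_k.+3) : 0 < c <= k.+1 -> c = b.+1 :> nat ->
  mcomp (slast_del0 k.+1) (sdeg M c) = mcomp (sdeg M b) (slast_del0 k).
Proof. move: (ltn_ord c) (ltn_ord b) => *; rewrite /slast_del0; duplicial_identity M. Qed.

Lemma del0_slast_sdeg0 n :
  mcomp (del0_slast n.+1) (sdeg M (k:=n) ord0) = mcomp (slast_del0 n) (sdeg M ord0).
Proof. rewrite /del0_slast /slast_del0; duplicial_identity M. Qed.

Lemma del0_sdeg0 n : mcomp (del M (k:=n) ord0) (sdeg M ord0) = idm.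
Proof. duplicial_identity M. Qed.

Lemma del1_sdeg0 n (o : 'I_n.+2) : o = 1 :> nat -> mcomp (del M o) (sdeg M ord0) = idm.
Proof. move=> *; duplicial_identity M. Qed.

Lemma del_last_sdeg_last n : mcomp (del M (k:=n) ord_max) (sdeg M ord_max) = idm.
Proof. duplicial_identity M. Qed.

End DuplicialIdentities.

Local Open Scope ring_scope.

Section Preadditive.
Variable A : preadditive.
Implicit Types a b c : Ob A.

Lemma comp0r a b c (g : Defs.Hom A b c) : mcomp g (0 : Defs.Hom A a b) = 0.
Proof. by apply: (addrI (mcomp g 0)); rewrite -compDr !addr0. Qed.

Lemma comp0l a b c (f : Defs.Hom A a b) : mcomp (0 : Defs.Hom A b c) f = 0.
Proof. by apply: (addrI (mcomp 0 f)); rewrite -compDl !addr0. Qed.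

Lemma compNr a b c (g : Defs.Hom A b c) (f : Defs.Hom A a b) :
  mcomp g (- f) = - mcomp g f.
Proof. by apply: (addrI (mcomp g f)); rewrite -compDr !subrr comp0r. Qed.

Lemma compNl a b c (g : Defs.Hom A b c) (f : Defs.Hom A a b) :
  mcomp (- g) f = - mcomp g f.
Proof. by apply: (addrI (mcomp g f)); rewrite -compDl !subrr comp0l. Qed.

Lemma compBr a b c (g : Defs.Hom A b c) (f1 f2 : Defs.Hom A a b) :
  mcomp g (f1 - f2) = mcomp g f1 - mcomp g f2.
Proof. by rewrite compDr compNr. Qed.

Lemma compBl a b c (g1 g2 : Defs.Hom A b c) (f : Defs.Hom A a b) :
  mcomp (g1 - g2) f = mcomp g1 f - mcomp g2 f.
Proof. by rewrite compDl compNl. Qed.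

Lemma comp_sumr a b c (g : Defs.Hom A b c) I (r : seq I) (P : pred I)
    (F : I -> Defs.Hom A a b) :
  mcomp g (\sum_(i <- r | P i) F i) = \sum_(i <- r | P i) mcomp g (F i).
Proof. exact: (big_morph (mcomp g) (compDr g) (comp0r _ g)). Qed.

Lemma comp_suml a b c (f : Defs.Hom A a b) I (r : seq I) (P : pred I)
    (F : I -> Defs.Hom A b c) :
  mcomp (\sum_(i <- r | P i) F i) f = \sum_(i <- r | P i) mcomp (F i) f.
Proof. exact: (big_morph (mcomp^~ f) (fun g1 g2 => compDl g1 g2 f) (comp0l _ f)). Qed.

Lemma sgn_odd a b i (x : Defs.Hom A a b) : sgn i x = if odd i then - x else x.
Proof. by rewrite /sgn -signr_odd; case: odd; rewrite ?mulrN1z ?mulr1z. Qed.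

Lemma sgnS a b i (x : Defs.Hom A a b) : sgn i.+1 x = - sgn i x.
Proof. by rewrite /sgn exprS mulN1r mulrNz. Qed.

Lemma sgnN a b i (x : Defs.Hom A a b) : sgn i (- x) = - sgn i x.
Proof. exact: mulNrz. Qed.

Lemma sgnK a b i (x : Defs.Hom A a b) : sgn i (sgn i x) = x.
Proof. by rewrite !sgn_odd; case: odd; rewrite ?opprK. Qed.

Lemma sgn0 a b i : sgn i (0 : Defs.Hom A a b) = 0.
Proof. exact: mul0rz. Qed.

Lemma comp_sgnr a b c i (g : Defs.Hom A b c) (f : Defs.Hom A a b) :
  mcomp g (sgn i f) = sgn i (mcomp g f).
Proof. by rewrite !sgn_odd; case: odd; rewrite ?compNr. Qed.

Lemma comp_sgnl a b c i (g : Defs.Hom A b c) (f : Defs.Hom A a b) :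
  mcomp (sgn i g) f = sgn i (mcomp g f).
Proof. by rewrite !sgn_odd; case: odd; rewrite ?compNl. Qed.

End Preadditive.

Section KaroubiOperator.
Variables (A : preadditive) (M : duplicial A).
Arguments kappa : simpl never.

Lemma kappaS k : kappa M k.+1 = sgn k.+1 (del0_slast M k.+1 - slast_del0 M k).
Proof. by []. Qed.

Lemma del_kappa k (a b : 'I_k.+3) : (0 < a)%nat -> b = a.+1 :> nat ->
  mcomp (del M a) (kappa M k.+2) = - mcomp (kappa M k.+1) (del M b).
Proof.
move=> a_gt0 b_eq; rewrite !kappaS comp_sgnr comp_sgnl compBr compBl.
by rewrite (del_del0_slast M a_gt0 b_eq) (del_slast_del0 M a_gt0 b_eq) sgnS.
Qed.

Lemma del_last_kappa n : mcomp (del M (k:=n) ord_max) (kappa M n.+1) = 0.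
Proof. by rewrite kappaS comp_sgnr compBr del_last_del0_slast subrr sgn0. Qed.

Lemma kappa_sdeg k (c b : 'I_k.+3) : (0 < c <= k.+1)%nat -> c = b.+1 :> nat ->
  mcomp (kappa M k.+2) (sdeg M c) = - mcomp (sdeg M b) (kappa M k.+1).
Proof.
move=> c_range c_eq; rewrite !kappaS comp_sgnr comp_sgnl compBr compBl.
by rewrite (del0_slast_sdeg M c_range c_eq) (slast_del0_sdeg M c_range c_eq) sgnS.
Qed.

Lemma kappa_sdeg0 n : mcomp (kappa M n.+1) (sdeg M (k:=n) ord0) = 0.
Proof. by rewrite kappaS comp_sgnl compBl del0_slast_sdeg0 subrr sgn0. Qed.

Lemma kappa_powS n j : kappa_pow M n j.+1 = mcomp (kappa M n) (kappa_pow M n j).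
Proof. by []. Qed.

Lemma kappa_pow0 n : kappa_pow M n 0 = idm.
Proof. by []. Qed.

Lemma del_kappa_pow n j (a b : 'I_n.+2) : (0 < a)%nat -> b = (a + j)%nat :> nat ->
  mcomp (del M a) (kappa_pow M n.+1 j) = sgn j (mcomp (kappa_pow M n j) (del M b)).
Proof.
elim: j a => [|j IHj] a a_gt0 b_eq.
  have -> : a = b by apply: ord_inj; rewrite b_eq addn0.
  by rewrite !kappa_pow0 compm1 comp1m.
have b_lt := ltn_ord b.
case: n a b a_gt0 b_eq IHj b_lt => [|k] a b a_gt0 b_eq IHj b_lt; first lia.
have a1_lt : (a.+1 < k.+3)%nat by lia.
rewrite kappa_powS Defs.compA (del_kappa (b := Ordinal a1_lt)) // compNl.
rewrite -Defs.compA (IHj (Ordinal a1_lt)) ?comp_sgnr ?Defs.compA ?sgnS //=; lia.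
Qed.

Lemma del_kappa_pow_eq0 n j (a : 'I_n.+2) : (0 < a)%nat -> (n.+2 <= a + j)%nat ->
  mcomp (del M a) (kappa_pow M n.+1 j) = 0.
Proof.
elim: j a => [|j IHj] a a_gt0 aj_ge; first by have := ltn_ord a; lia.
rewrite kappa_powS Defs.compA.
have [a_last | a_ne] := eqVneq (nat_of_ord a) n.+1.
  have -> : a = ord_max by apply: ord_inj.
  by rewrite del_last_kappa comp0l.
have a_lt := ltn_ord a.
case: n a a_gt0 aj_ge IHj a_ne a_lt => [|k] a a_gt0 aj_ge IHj a_ne a_lt; first lia.
have a1_lt : (a.+1 < k.+3)%nat by lia.
rewrite (del_kappa (b := Ordinal a1_lt)) // compNl -Defs.compA.
by rewrite IHj ?comp0r ?oppr0 //=; lia.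
Qed.

Lemma kappa_pow_sdeg n j (c b : 'I_n.+2) : (c <= n)%nat -> c = (b + j)%nat :> nat ->
  mcomp (kappa_pow M n.+1 j) (sdeg M c) = sgn j (mcomp (sdeg M b) (kappa_pow M n j)).
Proof.
elim: j b => [|j IHj] b c_le c_eq.
  have -> : c = b by apply: ord_inj; rewrite c_eq addn0.
  by rewrite !kappa_pow0 compm1 comp1m.
case: n c b c_le c_eq IHj => [|k] c b c_le c_eq IHj; first lia.
have b1_lt : (b.+1 < k.+3)%nat by lia.
rewrite kappa_powS -Defs.compA (IHj (Ordinal b1_lt)) /=; try lia.
rewrite comp_sgnr Defs.compA (kappa_sdeg (c := Ordinal b1_lt) (b := b)) /=; try lia.
by rewrite compNl -Defs.compA sgnN sgnS.
Qed.

Lemma kappa_pow_sdeg_eq0 n j (c : 'I_n.+2) : (c <= n)%nat -> (c < j)%nat ->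
  mcomp (kappa_pow M n.+1 j) (sdeg M c) = 0.
Proof.
elim: j => [|j IHj] c_le c_lt; first lia.
rewrite kappa_powS -Defs.compA.
have [c_ltj | c_eqj] := ltnP c j; first by rewrite IHj // comp0r.
rewrite (kappa_pow_sdeg (b := ord0)) /=; try lia.
by rewrite comp_sgnr Defs.compA kappa_sdeg0 comp0l sgn0.
Qed.

Lemma kappa_pow_dd n :
  mcomp (kappa_pow M n.+1 n) (dd M n)
  = mcomp (sdeg M ord0) (kappa_pow M n n)
    - sgn n (mcomp (kappa_pow M n.+1 n) (sdeg M ord_max)).
Proof.
rewrite /dd comp_sumr !big_ord_recr /= big1 ?add0r => [|i _]; last first.
  by rewrite comp_sgnr kappa_pow_sdeg_eq0 ?sgn0 //=; have := ltn_ord i; lia.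
by rewrite !comp_sgnr (kappa_pow_sdeg (b := ord0)) //= sgnK sgnS.
Qed.

Lemma bnd_kappa_pow n X (f : Defs.Hom A X (Mob M n.+1)) :
  mcomp (bnd M n) (mcomp (kappa_pow M n.+1 n) f)
  = mcomp (del M ord0) (mcomp (kappa_pow M n.+1 n) f)
    - mcomp (del M (inord 1)) (mcomp (kappa_pow M n.+1 n) f).
Proof.
rewrite /bnd comp_suml !big_ord_recl big1 ?addr0 => [|i _]; last first.
  by rewrite comp_sgnl Defs.compA del_kappa_pow_eq0 ?comp0l ?sgn0 //= /bump /=; lia.
rewrite !comp_sgnl !sgn_odd /=.
by have -> : lift ord0 ord0 = inord 1 :> 'I_n.+2 by apply: ord_inj; rewrite inordK.
Qed.

Lemma bnd_kappa_pow_dd n :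
  mcomp (bnd M n) (mcomp (kappa_pow M n.+1 n) (dd M n)) = kappa_pow M n n - dk_pi M n.
Proof.
rewrite bnd_kappa_pow kappa_pow_dd !compBr !comp_sgnr !Defs.compA.
rewrite del0_sdeg0 del1_sdeg0 ?inordK // !comp1m.
rewrite (del_kappa_pow (a := inord 1) (b := ord_max)) ?inordK //.
rewrite comp_sgnl -(Defs.compA (kappa_pow M n n)).
by rewrite del_last_sdeg_last compm1 sgnK subrr subr0 /dk_pi Defs.compA.
Qed.

End KaroubiOperator.

Theorem mainTheorem14 (A : preadditive) (M : duplicial A) (n : nat) :
  dk_pi M n = kappa_pow M n n - mcomp (bnd M n) (mcomp (kappa_pow M n.+1 n) (dd M n)).
Proof. by rewrite bnd_kappa_pow_dd opprB addrC subrK. Qed.
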